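(* Let $\mathcal{B}=\{e_k\}_{k=1}^\infty$ be a seminormalized quasi-greedy basis of a real Banach space $\mathbb{B}$ with quasi-greedy constant $K$. There is a constant $C>0$, independent of $\Gamma$ and $x$, such that for every finite $\Gamma\subset\mathbb N$ and every $x\in\mathbb B$, $$\|S_\Gamma(x)\|_{\mathbb B}\le C\,(8K^4)\Big(\sum_{k=1}^{|\Gamma|}\mu(k)\frac1k\Big)\|x\|_{\mathbb B}.$$
   Context: $\mathcal B$ seminormalized: $0<\inf_k\|e_k\|\le\sup_k\|e_k\|<\infty$; each $x$ has unique expansion $x=\sum_k a_k(x)e_k$, and $S_\Gamma(x)=\sum_{k\in\Gamma}a_k(x)e_k$. For a greedy ordering $\pi$ of $x$ (bijection with $|a_{\pi(k)}(x)|$ nonincreasing), $G_N(x)=\sum_{k=1}^N a_{\pi(k)}(x)e_{\pi(k)}$. Quasi-greedy means $G_N(x)\to x$ for all $x$; $K$ is the least constant with $\|G_N(x)\|\le K\|x\|$ and $\|x-G_N(x)\|\le K\|x\|$ for all $x,N$. $h_r(N)=\sup_{|\Gamma|=N}\|\sum_{k\in\Gamma}e_k\|$, $h_l(N)=\inf_{|\Gamma|=N}\|\sum_{k\in\Gamma}e_k\|$, $\mu(N)=\sup_{1\le k\le N}h_r(k)/h_l(k)$. *)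

From mathcomp Require Import all_boot all_order all_algebra.
From mathcomp Require Import all_classical all_reals all_analysis.
Set Implicit Arguments. Unset Strict Implicit. Unset Printing Implicit Defensive.
Import Order.TTheory GRing.Theory Num.Theory.
Import numFieldNormedType.Exports.
Local Open Scope classical_set_scope.
Local Open Scope ring_scope.

Section Defs.
Variables (R : realType) (V : normedModType R).

Definition partial_sum (e : nat -> V) (b : nat -> R) (n : nat) : V :=
  \sum_(k < n) b k *: e k.

Definition is_basis_coefs (e : nat -> V) (a : V -> nat -> R) : Prop :=
  (forall x : V, partial_sum e (a x) @ \oo --> x) /\
  (forall (x : V) (b : nat -> R), partial_sum e b @ \oo --> x -> b = a x).

Definition seminormalized (e : nat -> V) : Prop :=
  exists c1 c2 : R, 0 < c1 /\ forall k, c1 <= `|e k| <= c2.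

(* S_Gamma(x), Gamma a finite set of indices given by a duplicate-free list *)
Definition S_proj (e : nat -> V) (a : V -> nat -> R) (G : seq nat) (x : V) : V :=
  \sum_(k <- G) a x k *: e k.

Definition greedy_ordering (a : V -> nat -> R) (x : V) (pi : nat -> nat) : Prop :=
  bijective pi /\ forall i j : nat, (i <= j)%N -> `|a x (pi j)| <= `|a x (pi i)|.

Definition greedy_approx (e : nat -> V) (a : V -> nat -> R) (pi : nat -> nat)
  (x : V) (N : nat) : V := \sum_(k < N) a x (pi k) *: e (pi k).

Definition quasi_greedy (e : nat -> V) (a : V -> nat -> R) : Prop :=
  forall x pi, greedy_ordering a x pi -> greedy_approx e a pi x @ \oo --> x.

Definition qg_bound (e : nat -> V) (a : V -> nat -> R) (K : R) : Prop :=
  forall x pi N, greedy_ordering a x pi ->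
    `|greedy_approx e a pi x N| <= K * `|x| /\
    `|x - greedy_approx e a pi x N| <= K * `|x|.

Definition qg_constant (e : nat -> V) (a : V -> nat -> R) (K : R) : Prop :=
  qg_bound e a K /\ forall K', qg_bound e a K' -> K <= K'.

Definition indicator_norms (e : nat -> V) (N : nat) : set R :=
  [set r | exists G : seq nat, [/\ uniq G, size G = N & r = `|\sum_(k <- G) e k|]].

Definition h_r (e : nat -> V) (N : nat) : R := sup (indicator_norms e N).
Definition h_l (e : nat -> V) (N : nat) : R := inf (indicator_norms e N).

Definition mu (e : nat -> V) (N : nat) : R :=
  \big[Num.max/0]_(1 <= k < N.+1) (h_r e k / h_l e k).

End Defs.

(* Replacing x by a long partial sum y of its expansion, list Γ in
   nonincreasing order of |a_k(x)| and split it into its first p = |Γ|/2 indices and the rest.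
   The first part is handled by induction. On the rest the coefficients are at most
   t = |a_{Γ_p}(x)|, so Abel summation against the quasi-greedy bounds on sums of unit vectors
   gives a bound t h_r(p+1); on the other hand t h_l(p+1) ≲ ‖y‖, because the p+1 largest
   coefficients of y dominate t and their signed indicator sum is controlled by the greedy sums
   of y. Since μ(p+1)/2 ≤ Σ_{p<k≤|Γ|} μ(k)/k, the contributions add up to the harmonic-type sum,
   and finally ‖y‖ → ‖x‖. *)
From mathcomp Require Import all_boot all_order all_algebra.
From mathcomp Require Import all_classical all_reals all_analysis.
From mathcomp Require Import ring lra zify.
Import Order.TTheory GRing.Theory Num.Theory.
Import numFieldNormedType.Exports.
Local Open Scope ring_scope.

Lemma pairwise_rev (T : Type) (r : rel T) (s : seq T) :
  pairwise r (rev s) = pairwise (fun x y => r y x) s.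
Proof. by elim: s => [//|x s IH]; rewrite rev_cons pairwise_rcons pairwise_cons all_rev IH. Qed.

Section AbelSummation.
Variables (R : numDomainType) (V : normedModType R) (I : eqType).

Lemma abel_prefix_le (l : seq I) (w : I -> R) (v : I -> V) (b B : R) :
  0 <= b -> 0 <= B -> pairwise (fun i j => w j <= w i) l ->
  {in l, forall k, 0 <= w k <= b} ->
  (forall j, `|\sum_(k <- take j l) v k| <= B) ->
  `|\sum_(k <- l) w k *: v k| <= b * B.
Proof.
move=> + B0; elim/last_ind: l w b => [|l z IH] w b b0 wl wb vB.
  by rewrite big_nil normr0 mulr_ge0.
have /andP[wz0 wzb] : 0 <= w z <= b by apply: wb; rewrite mem_rcons mem_head.
move: wl; rewrite pairwise_rcons => /andP[/allP wlz wl].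
(* Abel's transformation: subtract the last weight from all the others. *)
have -> : \sum_(k <- rcons l z) w k *: v k =
    \sum_(k <- l) (w k - w z) *: v k + w z *: \sum_(k <- rcons l z) v k.
  rewrite -cats1 !big_cat /= !big_seq1 scalerDr addrA; congr (_ + _).
  by rewrite scaler_sumr -big_split /=; apply: eq_bigr => k _; rewrite scalerBl subrK.
rewrite (le_trans (ler_normD _ _)) // normrZ ger0_norm //.
rewrite -[b](subrK (w z)) mulrDl; apply: lerD; last first.
  by apply: ler_wpM2l => //; have := vB (size (rcons l z)); rewrite take_size.
apply: IH.
- by rewrite subr_ge0.
- by apply: sub_pairwise wl => i j /=; rewrite lerD2r.
- move=> k kl; rewrite lerD2r subr_ge0 wlz //=.
  by have /andP[_ ->] : 0 <= w k <= b by apply: wb; rewrite mem_rcons inE kl orbT.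
- move=> j; case: (leqP j (size l)) => jl; first by have := vB j; rewrite -cats1 takel_cat.
  rewrite take_oversize ?(ltnW jl) //.
  by have := vB (size l); rewrite -cats1 takel_cat // take_size.
Qed.

Lemma abel_suffix_le (l : seq I) (w : I -> R) (v : I -> V) (b B : R) :
  0 <= b -> 0 <= B -> pairwise (fun i j => w i <= w j) l ->
  {in l, forall k, 0 <= w k <= b} ->
  (forall j, `|\sum_(k <- drop j l) v k| <= B) ->
  `|\sum_(k <- l) w k *: v k| <= b * B.
Proof.
move=> b0 B0 wl wb vB; rewrite -big_rev; apply: abel_prefix_le => //.
- by rewrite pairwise_rev.
- by move=> k; rewrite mem_rev; apply: wb.
- by move=> j; rewrite take_rev big_rev.
Qed.

End AbelSummation.

Lemma sum_sg_split (R : realDomainType) (V : lmodType R) (e : nat -> V)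
    (c : nat -> R) (P : seq nat) :
  \sum_(k <- P) Num.sg (c k) *: e k =
  \sum_(k <- [seq x <- P | 0 < c x]) e k - \sum_(k <- [seq x <- P | c x < 0]) e k.
Proof.
rewrite !big_filter (bigID (fun k => 0 < c k)) /=.
rewrite [X in _ + X](bigID (fun k => c k < 0)) /= [X in _ + (_ + X)]big1; last first.
  move=> k /andP[/negbTE c_le0 /negbTE c_ge0].
  have -> : c k = 0 by apply/eqP; rewrite eq_le !leNgt c_le0 c_ge0.
  by rewrite sgr0 scale0r.
rewrite addr0 -sumrN; congr (_ + _).
  by apply: eq_bigr => k /gtr0_sg ->; rewrite scale1r.
apply: eq_big => [k|k /andP[_ /ltr0_sg ->]]; last by rewrite scaleN1r.
by case: (ltrgt0P (c k)).
Qed.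

Lemma sum_div_half_le (R : realFieldType) (f : nat -> R) (n : nat) :
  {homo f : m n / (m <= n)%N >-> m <= n} -> (forall k, 0 <= f k) -> (0 < n)%N ->
  \sum_(1 <= k < (n./2).+1) (f k / k%:R) + f (n./2).+1 / 2 <=
  \sum_(1 <= k < n.+1) (f k / k%:R).
Proof.
move=> f_mono f_ge0 n_gt0; set p := n./2.
have pn : (p < n)%N by rewrite /p; lia.
rewrite [X in _ <= X](@big_cat_nat _ _ _ p.+1) //= ?lerD2l; last exact: ltnW.
(* each of the n - p >= n/2 remaining terms is at least f (p+1) / n *)
apply: (@le_trans _ _ (\sum_(p.+1 <= k < n.+1) (f p.+1 / n%:R))).
  rewrite sumr_const_nat -mulrnAr ler_wpM2l //.
  rewrite -[n%:R^-1 *+ _]mulr_natl ler_pdivlMr ?ltr0n //.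
  have : (n%:R : R) <= 2 * (n.+1 - p.+1)%:R by rewrite -natrM ler_nat /p; lia.
  lra.
apply: ler_sum_nat => k /andP[pk kn].
apply: (@le_trans _ _ (f p.+1 / k%:R)).
  by rewrite ler_wpM2l // lef_pV2 ?posrE ?ltr0n ?ler_nat // (leq_trans _ pk).
by rewrite ler_wpM2r ?invr_ge0 ?ler0n // f_mono.
Qed.

Definition by_abs_desc {R : numDomainType} (c : nat -> R) : rel nat :=
  fun i j => `|c j| <= `|c i|.

Lemma desc_nth_le (R : numDomainType) (c : nat -> R) (l : seq nat) (i j : nat) :
  pairwise (by_abs_desc c) l -> (i <= j < size l)%N ->
  `|c (nth 0%N l j)| <= `|c (nth 0%N l i)|.
Proof.
move=> dl /andP[]; rewrite leq_eqVlt => /orP[/eqP -> //|ij jl].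
by move/pairwiseP: dl => /(_ 0%N i j); apply; rewrite ?inE // (ltn_trans ij jl).
Qed.

Lemma desc_take_ge (R : numDomainType) (c : nat -> R) (L : seq nat) (j : nat) :
  pairwise (by_abs_desc c) L -> (j < size L)%N ->
  {in take j.+1 L, forall k, `|c (nth 0%N L j)| <= `|c k|}.
Proof.
move=> dL jL k kL; rewrite -(nth_index 0%N (mem_take kL)).
by apply: desc_nth_le; rewrite // jL andbT -ltnS index_ltn.
Qed.

Lemma desc_drop_le (R : numDomainType) (c : nat -> R) (L : seq nat) (j : nat) :
  pairwise (by_abs_desc c) L -> {in drop j L, forall k, `|c k| <= `|c (nth 0%N L j)|}.
Proof.
move=> dL k kL; rewrite -[j]addn0 -nth_drop -(nth_index 0%N kL).
by apply: desc_nth_le; [exact: subseq_pairwise (drop_subseq _ _) dL | rewrite index_mem].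
Qed.

Section QuasiGreedy.
Variables (R : realType) (V : normedModType R) (e : nat -> V) (a : V -> nat -> R) (K : R).
Hypotheses (basis : is_basis_coefs e a) (qgK : qg_bound e a K).

Section FiniteExpansion.
Variables (c : nat -> R) (M : nat).
Hypothesis c_supp : forall k, (M <= k)%N -> c k = 0.
Local Notation y := (\sum_(k < M) c k *: e k).

Lemma coef_finite_sum : a y = c.
Proof.
symmetry; apply: basis.2; apply: cvg_near_cst; near=> N.
have MN : (M <= N)%N by near: N; exists M.
rewrite /partial_sum -!(big_mkord xpredT (fun k => c k *: e k)).
rewrite (big_cat_nat (leq0n M) MN) /= [X in _ + X]big1_seq ?addr0 //.
by move=> k /andP[_]; rewrite mem_index_iota => /andP[Mk _]; rewrite c_supp ?scale0r.
Unshelve. all: by end_near.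
Qed.

Variable s : seq nat.
Hypotheses (s_perm : perm_eq s (iota 0 M)) (s_desc : pairwise (by_abs_desc c) s).

(* s, extended by the identity beyond M, is a greedy ordering of y. *)
Lemma greedy_take_le N : (N <= M)%N -> `|\sum_(k <- take N s) c k *: e k| <= K * `|y|.
Proof.
move=> NM.
have s_size : size s = M by rewrite (perm_size s_perm) size_iota.
have s_uniq : uniq s by rewrite (perm_uniq s_perm) iota_uniq.
have mem_s k : (k \in s) = (k < M)%N by rewrite (perm_mem s_perm) mem_iota.
pose pi k := if (k < M)%N then nth 0%N s k else k.
have pi_greedy : greedy_ordering a y pi.
  rewrite /greedy_ordering coef_finite_sum; split.
    exists (fun k => if (k < M)%N then index k s else k) => k; rewrite /pi.
      case: (ltnP k M) => kM; last by rewrite ltnNge kM.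
      by rewrite -mem_s mem_nth ?s_size // index_uniq ?s_size.
    case: (ltnP k M) => kM; last by rewrite ltnNge kM.
    by rewrite -s_size index_mem mem_s kM nth_index ?mem_s.
  move=> i j ij; rewrite /pi; case: (ltnP j M) => jM.
    by rewrite (leq_ltn_trans ij jM) desc_nth_le ?ij ?s_size.
  by rewrite c_supp // normr0; case: ifP.
have [greedy_le _] := qgK _ _ N pi_greedy.
suff -> : \sum_(k <- take N s) c k *: e k = greedy_approx e a pi y N by [].
rewrite /greedy_approx coef_finite_sum (big_nth 0%N) size_takel ?s_size // big_mkord.
by apply: eq_bigr => i _; rewrite nth_take // /pi (leq_trans (ltn_ord i) NM).
Qed.

End FiniteExpansion.

Lemma take_sum_le (Q : seq nat) (d : nat -> R) (N : nat) :
  uniq Q -> {in Q, forall k, `|d k| = 1} -> (N <= size Q)%N ->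
  `|\sum_(k <- take N Q) d k *: e k| <= K * `|\sum_(k <- Q) d k *: e k|.
Proof.
(* Extended by 0 off Q, d is nonincreasing in modulus along Q followed by the other indices. *)
move=> uQ dQ NQ.
set M := (\max_(k <- Q) k).+1.
have QM k : k \in Q -> (k < M)%N.
  by move=> kQ; rewrite ltnS (@leq_bigmax_seq _ _ xpredT (fun k => k) k kQ).
pose c k := if k \in Q then d k else 0.
pose rest := [seq k <- iota 0 M | k \notin Q].
have c_supp k : (M <= k)%N -> c k = 0.
  by rewrite /c; case: ifP => // /QM; rewrite ltnNge => /negbTE ->.
have c_rest k : k \in rest -> c k = 0.
  by rewrite mem_filter => /andP[/negbTE kQ _]; rewrite /c kQ.
have u_rest : uniq rest by rewrite filter_uniq ?iota_uniq.
have s_perm : perm_eq (Q ++ rest) (iota 0 M).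
  apply: uniq_perm => [||k]; rewrite ?iota_uniq //.
    by rewrite cat_uniq uQ u_rest andbT; apply/hasPn => k; rewrite mem_filter => /andP[].
  rewrite mem_cat mem_filter mem_iota /=.
  by case kQ: (k \in Q) => //=; rewrite (QM _ kQ).
have desc_in (l : seq nat) : uniq l -> {in l &, forall i j, by_abs_desc c i j} ->
    pairwise (by_abs_desc c) l.
  move=> ul cl; apply: (@sub_in_pairwise _ (mem l) [rel i j | i != j]).
  - by move=> i j il jl _; apply: cl.
  - by apply/allP.
  - by rewrite -uniq_pairwise.
have s_desc : pairwise (by_abs_desc c) (Q ++ rest).
  rewrite pairwise_cat; apply/and3P; split.
  - by apply/allrelP => i j _ /c_rest cj; rewrite /by_abs_desc cj normr0.
  - by apply: desc_in => // i j iQ jQ; rewrite /by_abs_desc /c iQ jQ !dQ.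
  - by apply: desc_in => // i j _ /c_rest cj; rewrite /by_abs_desc cj normr0.
have NM : (N <= M)%N.
  apply: (leq_trans NQ); rewrite -(size_iota 0 M); apply: uniq_leq_size => // k /QM.
  by rewrite mem_iota.
have := @greedy_take_le c M c_supp _ s_perm s_desc N NM.
rewrite takel_cat // -(big_mkord xpredT (fun k => c k *: e k)) -(perm_big _ s_perm).
rewrite big_cat /= [X in _ + X]big1_seq ?addr0; last first.
  by move=> k /andP[_ /c_rest ->]; rewrite scale0r.
have c_Q (l : seq nat) : {subset l <= Q} ->
    \sum_(k <- l) c k *: e k = \sum_(k <- l) d k *: e k.
  by move=> lQ; apply: eq_big_seq => k /lQ kQ; rewrite /c kQ.
by rewrite !c_Q // => k /mem_take.
Qed.

Lemma filter_sum_le (A : seq nat) (d : nat -> R) (p : pred nat) :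
  uniq A -> {in A, forall k, `|d k| = 1} ->
  `|\sum_(k <- [seq x <- A | p x]) d k *: e k| <= K * `|\sum_(k <- A) d k *: e k|.
Proof.
move=> uA dA; set Q := [seq x <- A | p x] ++ [seq x <- A | predC p x].
have QA : perm_eq Q A by rewrite perm_filterC.
have := @take_sum_le Q d (size [seq x <- A | p x]).
rewrite take_size_cat // (perm_big _ QA) (perm_uniq QA) size_cat leq_addr; apply => //.
by move=> k; rewrite (perm_mem QA); apply: dA.
Qed.

Lemma unimodular_sum_le (A : seq nat) (d : nat -> R) :
  uniq A -> {in A, forall k, `|d k| = 1} ->
  `|\sum_(k <- A) e k| <= 2 * K * `|\sum_(k <- A) d k *: e k|.
Proof.
move=> uA dA.
have -> : \sum_(k <- A) e k = \sum_(k <- [seq k <- A | 0 < d k]) d k *: e k -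
    \sum_(k <- [seq k <- A | ~~ (0 < d k)]) d k *: e k.
  rewrite !big_filter (bigID (fun k => 0 < d k)) /= -sumrN.
  congr (_ + _); rewrite big_seq_cond [RHS]big_seq_cond; apply: eq_bigr => k /andP[kA dk].
    by have := dA k kA; rewrite gtr0_norm // => ->; rewrite scale1r.
  have := dA k kA; rewrite ler0_norm ?leNgt // => /eqP; rewrite eqr_oppLR => /eqP ->.
  by rewrite scaleN1r opprK.
rewrite (le_trans (ler_normB _ _)) // -mulrA mulr_natl mulr2n.
by apply: lerD; apply: filter_sum_le.
Qed.

Section Seminormalized.
Variables (c1 c2 : R).
Hypotheses (c1_gt0 : 0 < c1) (e_bounded : forall k, c1 <= `|e k| <= c2).

Lemma has_sup_indicator_norms n : has_sup (indicator_norms e n).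
Proof.
split; first by exists `|\sum_(k <- iota 0 n) e k|; exists (iota 0 n); rewrite iota_uniq size_iota.
exists (n%:R * c2) => _ [Q [_ <- ->]].
elim: Q => [|q Q IH]; first by rewrite big_nil normr0 mul0r.
rewrite big_cons /= (le_trans (ler_normD _ _)) // -addn1 natrD mulrDl mul1r addrC.
by rewrite lerD //; case/andP: (e_bounded q).
Qed.

Lemma norm_sum_le_hr (Q : seq nat) : uniq Q -> `|\sum_(k <- Q) e k| <= h_r e (size Q).
Proof. by move=> uQ; apply: sup_upper_bound; [exact: has_sup_indicator_norms | exists Q]. Qed.

Lemma hl_le_norm_sum (Q : seq nat) : uniq Q -> h_l e (size Q) <= `|\sum_(k <- Q) e k|.
Proof. by move=> uQ; apply: ge_inf; [exists 0 => _ [? [_ _ ->]] | exists Q]. Qed.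

Lemma hr_ge0 m : 0 <= h_r e m.
Proof.
by have := @norm_sum_le_hr (iota 0 m) (iota_uniq 0 m); rewrite size_iota; apply: le_trans.
Qed.

Lemma norm_e_le_sum (Q : seq nat) q : uniq Q -> q \in Q ->
  `|e q| <= K * `|\sum_(k <- Q) e k|.
Proof.
move=> uQ qQ; have Qq := perm_to_rem qQ.
have := @take_sum_le (q :: rem q Q) (fun=> 1) 1%N.
rewrite -(perm_uniq Qq) -(perm_big _ Qq) /= take0 big_seq1 scale1r.
under eq_bigr do rewrite scale1r.
by apply=> // k _; rewrite normr1.
Qed.

Lemma qg_ge1 : 1 <= K.
Proof.
have /andP[c1_le _] := e_bounded 0.
have := @norm_e_le_sum [:: 0%N] 0%N isT (mem_head _ _).
by rewrite big_seq1 -{1}[`|e 0%N|]mul1r ler_pM2r // (lt_le_trans c1_gt0).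
Qed.

Lemma qg_gt0 : 0 < K.
Proof. exact: lt_le_trans ltr01 qg_ge1. Qed.

Lemma hl_gt0 m : (0 < m)%N -> 0 < h_l e m.
Proof.
move=> m_gt0; apply: (@lt_le_trans _ _ (c1 / K)); first by rewrite divr_gt0 ?qg_gt0.
apply: lb_le_inf.
  by exists `|\sum_(k <- iota 0 m) e k|; exists (iota 0 m); rewrite iota_uniq size_iota.
move=> _ [Q [uQ sQ ->]]; rewrite ler_pdivrMr ?qg_gt0 // mulrC.
have qQ : nth 0%N Q 0 \in Q by rewrite mem_nth // sQ.
have /andP[c1_le _] := e_bounded (nth 0%N Q 0).
exact: le_trans c1_le (norm_e_le_sum _ _ uQ qQ).
Qed.

Lemma le_mu m n : (m <= n)%N -> mu e m <= mu e n.
Proof. by move=> mn; apply: le_bigmax_nat. Qed.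

Lemma mu_ge0 n : 0 <= mu e n.
Proof. by have := @le_mu 0 n (leq0n n); rewrite /mu big_geq. Qed.

Lemma hr_le_mu_hl m : (0 < m)%N -> h_r e m <= mu e m * h_l e m.
Proof.
move=> m_gt0; rewrite -ler_pdivrMr ?hl_gt0 // /mu.
apply: (@le_bigmax_seq _ _ _ (index_iota 1 m.+1) 0 m xpredT (fun k => h_r e k / h_l e k)).
  by rewrite mem_index_iota m_gt0 ltnSn.
by [].
Qed.

(* Any P extends, by indices beyond max P, to a set of size m. *)
Lemma sum_le_hr (P : seq nat) m : uniq P -> (size P <= m)%N ->
  `|\sum_(k <- P) e k| <= K * h_r e m.
Proof.
move=> uP Pm; set n := (\max_(k <- P) k).+1; set Q := P ++ iota n (m - size P).
have uQ : uniq Q.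
  rewrite cat_uniq uP iota_uniq andbT; apply/hasPn => k; rewrite mem_iota => /andP[nk _].
  apply/negP => /(@leq_bigmax_seq _ _ xpredT (fun k => k) k)/(_ isT).
  by rewrite leqNgt (leq_trans _ nk).
have sQ : size Q = m by rewrite size_cat size_iota subnKC.
have := @take_sum_le Q (fun=> 1) (size P) uQ (fun _ _ => normr1 _).
rewrite take_size_cat // size_cat leq_addr; under eq_bigr do rewrite scale1r.
under [X in _ <= K * `|X|]eq_bigr do rewrite scale1r.
move=> /(_ isT)/le_trans; apply; rewrite ler_pM2l ?qg_gt0 //.
by have := norm_sum_le_hr _ uQ; rewrite sQ.
Qed.

Lemma desc_sum_le_hr (c : nat -> R) (P : seq nat) (t : R) m :
  pairwise (by_abs_desc c) P -> uniq P -> {in P, forall k, `|c k| <= t} -> 0 <= t ->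
  (size P <= m)%N -> `|\sum_(k <- P) c k *: e k| <= t * (2 * K * h_r e m).
Proof.
move=> dP uP cP t_ge0 Pm.
have -> : \sum_(k <- P) c k *: e k = \sum_(k <- P) `|c k| *: (Num.sg (c k) *: e k).
  by apply: eq_bigr => k _; rewrite scalerA mulrC mulr_sg_norm.
apply: abel_prefix_le => //.
- by rewrite !mulr_ge0 ?hr_ge0 // ltW // qg_gt0.
- by move=> k kP; rewrite normr_ge0 cP.
move=> j; rewrite sum_sg_split (le_trans (ler_normB _ _)) // -mulrA mulr_natl mulr2n.
have filter_le (p : pred nat) : `|\sum_(k <- [seq x <- take j P | p x]) e k| <= K * h_r e m.
  apply: sum_le_hr; first by rewrite filter_uniq ?take_uniq.
  apply: leq_trans Pm; apply: size_subseq.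
  exact: subseq_trans (filter_subseq _ _) (take_subseq _ _).
by rewrite lerD ?filter_le.
Qed.

Section Truncation.
Variables (c : nat -> R) (M : nat) (s : seq nat).
Hypotheses (c_supp : forall k, (M <= k)%N -> c k = 0)
  (s_perm : perm_eq s (iota 0 M)) (s_desc : pairwise (by_abs_desc c) s).
Local Notation y := (\sum_(k < M) c k *: e k).

Let s_size : size s = M. Proof. by rewrite (perm_size s_perm) size_iota. Qed.
Let s_uniq : uniq s. Proof. by rewrite (perm_uniq s_perm) iota_uniq. Qed.
Let greedy_le := @greedy_take_le c M c_supp s s_perm s_desc.

Lemma sg_prefix_le j : (j < M)%N ->
  `|c (nth 0%N s j)| * `|\sum_(k <- take j.+1 s) Num.sg (c k) *: e k| <= 2 * K * `|y|.
Proof.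
move=> jM; set t := `|c (nth 0%N s j)|; set A := take j.+1 s.
have K_gt0 := qg_gt0.
have := normr_ge0 (c (nth 0%N s j)); rewrite -/t le_eqVlt => /orP[/eqP <-|t_gt0].
  by rewrite mul0r !mulr_ge0 // ltW.
have tA : {in A, forall k, t <= `|c k|} by apply: desc_take_ge; rewrite ?s_size.
have c_gt0 k : k \in A -> 0 < `|c k| by move=> kA; exact: lt_le_trans t_gt0 (tA k kA).
(* Abel summation with the nondecreasing weights t / |c k| <= 1 against greedy sums *)
have abel : `|\sum_(k <- A) (t / `|c k|) *: (c k *: e k)| <= 1 * (2 * K * `|y|).
  apply: abel_suffix_le => //.
  - by rewrite !mulr_ge0 // ltW.
  - apply: (@sub_in_pairwise _ (mem A) (by_abs_desc c)).
    + move=> i k iA kA /= cik; rewrite ler_wpM2l ?(ltW t_gt0) //.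
      by rewrite lef_pV2 ?posrE ?c_gt0.
    + by apply/allP.
    + exact: subseq_pairwise (take_subseq _ _) s_desc.
  - by move=> k kA; rewrite divr_ge0 ?(ltW t_gt0) //= ler_pdivrMr ?c_gt0 // mul1r tA.
  - move=> i; have := cat_take_drop i A.
    move=> /(congr1 (fun l => \sum_(k <- l) c k *: e k)); rewrite big_cat /= => A_split.
    have -> : \sum_(k <- drop i A) c k *: e k =
        \sum_(k <- A) c k *: e k - \sum_(k <- take i A) c k *: e k.
      by rewrite -A_split addrC addrK.
    rewrite (le_trans (ler_normB _ _)) // -mulrA mulr_natl mulr2n.
    apply: lerD; first exact: greedy_le.
    by rewrite /A -take_min; apply: greedy_le; rewrite geq_min jM orbT.
suff sum_A : \sum_(k <- A) (t / `|c k|) *: (c k *: e k) = t *: \sum_(k <- A) Num.sg (c k) *: e k.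
  by rewrite sum_A normrZ ger0_norm ?(ltW t_gt0) // mul1r in abel.
rewrite scaler_sumr; apply: eq_big_seq => k kA; rewrite !scalerA; congr (_ *: _).
by rewrite [X in _ / _ * X](numEsg (c k)) mulrCA divfK ?gt_eqF ?c_gt0 // mulrC.
Qed.

Lemma coef_hl_le j : (j < M)%N -> `|c (nth 0%N s j)| * h_l e j.+1 <= 4 * K ^+ 2 * `|y|.
Proof.
move=> jM; set t := `|c (nth 0%N s j)|; set A := take j.+1 s.
have K_gt0 := qg_gt0.
have := normr_ge0 (c (nth 0%N s j)); rewrite -/t le_eqVlt => /orP[/eqP <-|t_gt0].
  by rewrite mul0r !mulr_ge0 ?exprn_ge0 // ltW.
have sgA : {in A, forall k, `|Num.sg (c k)| = 1}.
  move=> k kA; rewrite normr_sg -normr_gt0 (lt_le_trans t_gt0) //.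
  by apply: desc_take_ge; rewrite ?s_size.
have hl_le : h_l e j.+1 <= 2 * K * `|\sum_(k <- A) Num.sg (c k) *: e k|.
  have := @hl_le_norm_sum A (take_uniq _ s_uniq); rewrite size_takel ?s_size //.
  by move/le_trans; apply; apply: unimodular_sum_le; rewrite ?take_uniq.
have := ler_wpM2l (ltW t_gt0) hl_le; move/le_trans; apply; rewrite mulrCA.
have K2_ge0 : 0 <= 2 * K by rewrite mulr_ge0 // ltW.
have := ler_wpM2l K2_ge0 (sg_prefix_le _ jM); move/le_trans; apply.
by rewrite le_eqVlt; apply/orP; left; apply/eqP; ring.
Qed.

Lemma desc_coef_hl_le (L : seq nat) j : uniq L -> pairwise (by_abs_desc c) L ->
  (j < size L)%N -> `|c (nth 0%N L j)| * h_l e j.+1 <= 4 * K ^+ 2 * `|y|.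
Proof.
move=> uL dL jL; set t := `|c (nth 0%N L j)|; set W := take j.+1 L.
have := normr_ge0 (c (nth 0%N L j)); rewrite -/t le_eqVlt => /orP[/eqP <-|t_gt0].
  by rewrite mul0r !mulr_ge0 ?exprn_ge0 // ltW ?qg_gt0.
have tW : {in W, forall w, t <= `|c w|} by exact: desc_take_ge.
have W_supp w : w \in W -> (w < M)%N.
  move=> wW; rewrite ltnNge; apply/negP => /c_supp cw.
  by have := tW w wW; rewrite cw normr0 leNgt t_gt0.
(* the j+1 indices of W cannot all lie among the first j indices of s *)
have [w wW w_notin] : exists2 w, w \in W & w \notin take j s.
  apply/allPn; apply/negP => /allP W_sub.
  have := uniq_leq_size (take_uniq _ uL) W_sub.
  by rewrite size_takel // size_take_min leqNgt ltnS geq_minl.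
have w_s : w \in s by rewrite (perm_mem s_perm) mem_iota W_supp.
set q := index w s.
have jq : (j <= q)%N.
  rewrite leqNgt; apply: contra w_notin => qj.
  rewrite -(nth_index 0%N w_s) -(nth_take 0%N qj) mem_nth // size_take.
  by case: ifP => // _; rewrite index_mem.
have qM : (q < M)%N by rewrite -s_size index_mem.
have := coef_hl_le _ (leq_ltn_trans jq qM); apply: le_trans.
rewrite ler_pM2r ?hl_gt0 //; have := tW w wW; move/le_trans; apply.
by rewrite -(nth_index 0%N w_s) desc_nth_le // jq index_mem.
Qed.

Lemma desc_sum_le (L : seq nat) : uniq L -> pairwise (by_abs_desc c) L ->
  `|\sum_(k <- L) c k *: e k| <=
    16 * K ^+ 3 * (\sum_(1 <= k < (size L).+1) (mu e k / k%:R)) * `|y|.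
Proof.
have K_gt0 := qg_gt0.
have [n] := ubnP (size L); elim: n L => // n IH L sLn uL dL.
have [->|L_neq0] := eqVneq L [::].
  by rewrite big_nil normr0 big_geq // mulr0 mul0r.
have L_gt0 : (0 < size L)%N by rewrite lt0n size_eq0.
set p := (size L)./2; set t : R := `|c (nth 0%N L p)|.
have pL : (p < size L)%N by rewrite /p; lia.
have -> : \sum_(k <- L) c k *: e k =
    \sum_(k <- take p L) c k *: e k + \sum_(k <- drop p L) c k *: e k.
  by rewrite -big_cat cat_take_drop.
have top : `|\sum_(k <- take p L) c k *: e k| <=
    16 * K ^+ 3 * (\sum_(1 <= k < p.+1) (mu e k / k%:R)) * `|y|.
  have := IH (take p L); rewrite size_takel ?(ltnW pL) //; apply.
  - exact: leq_trans pL sLn.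
  - exact: take_uniq.
  - exact: subseq_pairwise (take_subseq _ _) dL.
(* on the tail the coefficients are at most t, and t h_l(p+1) <~ |y| *)
have rest : `|\sum_(k <- drop p L) c k *: e k| <= 8 * K ^+ 3 * mu e p.+1 * `|y|.
  have := @desc_sum_le_hr c (drop p L) t p.+1
    (subseq_pairwise (drop_subseq _ _) dL) (drop_uniq _ uL) (@desc_drop_le _ c L p dL) (normr_ge0 _).
  have drop_size : (size (drop p L) <= p.+1)%N by rewrite size_drop /p; lia.
  move=> /(_ drop_size)/le_trans; apply.
  apply: (@le_trans _ _ (2 * K * mu e p.+1 * (t * h_l e p.+1))).
    rewrite [X in _ <= X](_ : _ = t * (2 * K * (mu e p.+1 * h_l e p.+1))); last by ring.
    apply: ler_wpM2l; first exact: normr_ge0.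
    by apply: ler_wpM2l; [rewrite mulr_ge0 // ltW | exact: hr_le_mu_hl].
  rewrite [X in _ <= X](_ : _ = 2 * K * mu e p.+1 * (4 * K ^+ 2 * `|y|)); last by ring.
  apply: ler_wpM2l; first by rewrite !mulr_ge0 ?mu_ge0 // ltW.
  exact: desc_coef_hl_le.
have half := @sum_div_half_le R (mu e) (size L) le_mu mu_ge0 L_gt0; rewrite -/p in half.
apply: (le_trans (ler_normD _ _)); apply: (le_trans (lerD top rest)).
rewrite [X in X <= _](_ : _ =
  16 * K ^+ 3 * (\sum_(1 <= k < p.+1) (mu e k / k%:R) + mu e p.+1 / 2) * `|y|); last by field.
by rewrite ler_wpM2r // ler_wpM2l // mulr_ge0 // exprn_ge0 // ltW.
Qed.

End Truncation.

Lemma S_proj_le_partial_sum (G : seq nat) (x : V) (M : nat) :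
  uniq G -> (\max_(k <- G) k < M)%N ->
  `|S_proj e a G x| <=
    16 * K ^+ 3 * (\sum_(1 <= k < (size G).+1) (mu e k / k%:R)) * `|partial_sum e (a x) M|.
Proof.
move=> uG GM; pose c k := if (k < M)%N then a x k else 0.
have c_supp k : (M <= k)%N -> c k = 0 by rewrite /c ltnNge => ->.
have desc_total : total (by_abs_desc c) by move=> i j; apply: le_total.
have desc_trans : transitive (by_abs_desc c) by move=> j i k ji jk; exact: le_trans jk ji.
have sort_desc l : pairwise (by_abs_desc c) (sort (by_abs_desc c) l).
  by rewrite -sorted_pairwise // sort_sorted.
have := @desc_sum_le c M _ c_supp (permEl (perm_sort _ _)) (sort_desc _) (sort (by_abs_desc c) G).
rewrite sort_uniq size_sort (perm_big G (permEl (perm_sort _ _))) => /(_ uG (sort_desc G)).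
have -> : \sum_(k <- G) c k *: e k = S_proj e a G x.
  apply: eq_big_seq => k kG; rewrite /c (leq_ltn_trans _ GM) //.
  exact: (@leq_bigmax_seq _ _ xpredT (fun k => k) k kG).
have -> // : \sum_(k < M) c k *: e k = partial_sum e (a x) M.
by apply: eq_bigr => i _; rewrite /c ltn_ord.
Qed.

End Seminormalized.
End QuasiGreedy.

Theorem lemma2p3 (R : realType) (V : completeNormedModType R)
  (e : nat -> V) (a : V -> nat -> R) (K : R) :
  is_basis_coefs e a -> seminormalized e -> quasi_greedy e a ->
  qg_constant e a K ->
  exists C : R, 0 < C /\
    forall (G : seq nat) (x : V), uniq G ->
      `|S_proj e a G x| <=
        C * (8 * K ^+ 4) *
        (\sum_(1 <= k < (size G).+1) (mu e k / k%:R)) * `|x|.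
Proof.
move=> basis [c1 [c2 [c1_gt0 e_bounded]]] _ [qgK _].
have K_gt0 := @qg_gt0 R V e a K basis qgK c1 c2 c1_gt0 e_bounded.
(* the argument gives the bound 16 K^3, so C = 2 / K *)
exists (2 / K); split; first by rewrite divr_gt0.
move=> G x uG; have -> : 2 / K * (8 * K ^+ 4) = 16 * K ^+ 3 by field; rewrite gt_eqF.
set C := 16 * K ^+ 3 * _.
have C_lim : ((fun M => C * `|partial_sum e (a x) M|) @ \oo --> C * `|x|)%classic.
  by apply: cvgMl_tmp; apply: cvg_norm; exact: basis.1 x.
rewrite -(cvg_lim _ C_lim); last exact: Rhausdorff.
apply: limr_ge; first by apply/cvg_ex; exists (C * `|x|).
near=> M; apply: (@S_proj_le_partial_sum R V e a K basis qgK c1 c2 c1_gt0 e_bounded G x M uG).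
near: M; exists (\max_(k <- G) k).+1 => //.
Unshelve. all: by end_near.
Qed.
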